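(* Let $\lambda_\pm : \mathbb{R} \to \mathbb{R}_\pm$ be defined by $\lambda_\pm(x) = x \pm \sqrt{1+x^2}$ (these are increasing bijections onto the positive and negative reals respectively), and let \[ p_\gamma' := \frac{p}{\sqrt{p^2 + |q|^2\cosh^{-2}(2\gamma)}} \in (-1,1). \] Define subsets $\sigma_\pm(U) \subset \mathbb{R}_\pm$ by \[ \sigma_\pm(U) = \begin{cases} \{\lambda_\pm(+p\sinh(2\gamma))\}, & a_m < \pm p_\gamma' < a_p, \\ \{\lambda_\pm(-p\sinh(2\gamma))\}, & a_p < \pm p_\gamma' < a_m, \\ \emptyset, & \text{otherwise}. \end{cases} \] Then the set of eigenvalues of $U$ satisfies $\sigma_{\mathrm{p}}(U) = \sigma_-(U) \cup \sigma_+(U)$.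
   Context: Let $L$ be the bilateral left shift on $\ell^2(\mathbb{Z}) = \ell^2(\mathbb{Z};\mathbb{C})$, $(L\Psi)(x) = \Psi(x+1)$; bounded sequences are identified with the corresponding multiplication operators. Fix $\gamma \in \mathbb{R}$, $p \in (-1,1)$, $q \in \mathbb{C}$ with $p^2+|q|^2 = 1$, and $a_p, a_m \in (-1,1)$, $b_p, b_m \in \mathbb{C}$ with $a_p^2 + |b_p|^2 = a_m^2 + |b_m|^2 = 1$. Let $a(x) = a_p$, $b(x) = b_p$ for $x \ge 0$ and $a(x) = a_m$, $b(x) = b_m$ for $x < 0$. On $\mathcal{H} = \ell^2(\mathbb{Z};\mathbb{C}^2) \cong \ell^2(\mathbb{Z}) \oplus \ell^2(\mathbb{Z})$ define the (generally non-unitary) two-phase split-step quantum walk $U = SC$, where \[ S = \begin{pmatrix} p & qL \\ \overline{q}L^* & -p \end{pmatrix},\qquad C = \begin{pmatrix} e^{-2\gamma} a & \overline{b} \\ b & -e^{2\gamma} a \end{pmatrix}. \] $\sigma_{\mathrm{p}}(U)$ denotes the set of $\lambda \in \mathbb{C}$ with $\ker(U - \lambda) \neq \{0\}$ in $\mathcal{H}$. $\mathbb{R}_+$ and $\mathbb{R}_-$ denote the sets of positive and negative real numbers. *)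

From Stdlib Require Import Reals ZArith.
From Coquelicot Require Import Coquelicot.

Open Scope R_scope.

Definition two_phase {T : Type} (vp vm : T) (x : Z) : T :=
  if (0 <=? x)%Z then vp else vm.

Definition sqnorm2 (v : C * C) : R := (Cmod (fst v))^2 + (Cmod (snd v))^2.

Definition is_l2 (Psi : Z -> C * C) : Prop :=
  ex_series (fun n : nat => sqnorm2 (Psi (Z.of_nat n))) /\
  ex_series (fun n : nat => sqnorm2 (Psi (- Z.of_nat n - 1)%Z)).

(* coin operator C = [[e^{-2g} a, conj b],[b, -e^{2g} a]] acting pointwise *)
Definition coin_op (gamma : R) (a : Z -> R) (b : Z -> C)
  (Psi : Z -> C * C) (x : Z) : C * C :=
  ((RtoC (exp (-2 * gamma) * a x) * fst (Psi x) + Cconj (b x) * snd (Psi x))%C,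
   (b x * fst (Psi x) - RtoC (exp (2 * gamma) * a x) * snd (Psi x))%C).

(* shift operator S = [[p, q L],[conj q L^*, -p]], (L Psi)(x) = Psi(x+1),
   (L^* Psi)(x) = Psi(x-1) *)
Definition shift_op (p : R) (q : C) (Phi : Z -> C * C) (x : Z) : C * C :=
  ((RtoC p * fst (Phi x) + q * snd (Phi (x + 1)%Z))%C,
   (Cconj q * fst (Phi (x - 1)%Z) - RtoC p * snd (Phi x))%C).

Definition U_op (gamma p : R) (q : C) (ap am : R) (bp bm : C)
  (Psi : Z -> C * C) : Z -> C * C :=
  shift_op p q (coin_op gamma (two_phase ap am) (two_phase bp bm) Psi).

Definition in_point_spectrum (gamma p : R) (q : C) (ap am : R) (bp bm : C)
  (lam : C) : Prop :=
  exists Psi : Z -> C * C,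
    is_l2 Psi /\ (exists x, Psi x <> (RtoC 0, RtoC 0)) /\
    forall x, U_op gamma p q ap am bp bm Psi x =
              ((lam * fst (Psi x))%C, (lam * snd (Psi x))%C).

Definition lambda_plus (x : R) : R := x + sqrt (1 + x ^ 2).
Definition lambda_minus (x : R) : R := x - sqrt (1 + x ^ 2).

Definition p_gamma' (gamma p : R) (q : C) : R :=
  p / sqrt (p ^ 2 + (Cmod q) ^ 2 / (cosh (2 * gamma)) ^ 2).

Definition in_sigma_plus (gamma p : R) (q : C) (ap am : R) (lam : C) : Prop :=
  (am < p_gamma' gamma p q < ap /\ lam = RtoC (lambda_plus (p * sinh (2 * gamma)))) \/
  (ap < p_gamma' gamma p q < am /\ lam = RtoC (lambda_plus (- (p * sinh (2 * gamma))))).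

Definition in_sigma_minus (gamma p : R) (q : C) (ap am : R) (lam : C) : Prop :=
  (am < - p_gamma' gamma p q < ap /\ lam = RtoC (lambda_minus (p * sinh (2 * gamma)))) \/
  (ap < - p_gamma' gamma p q < am /\ lam = RtoC (lambda_minus (- (p * sinh (2 * gamma))))).

From Stdlib Require Import Reals ZArith Lia Lra Psatz Nsatz.
From Coquelicot Require Import Coquelicot.

(** Since [S] is an involution, [U Psi = lam Psi] is equivalent to [C Psi = lam S Psi]. Read on
    the staggered vectors [v x = (Psi_1 (x - 1), Psi_2 x)], this is a first-order recurrence
    [M v (x + 1) = N v x] whose 2x2 coefficients [M], [N] depend only on the coin at [x] and
    satisfy [|det M| = |det N|]. On a half line the Wronskian [det (v n, v (n + 1))] therefore
    has non-decreasing modulus; for a square-summable solution it tends to [0], hence vanishes,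
    and the solution is geometric with a ratio of modulus [< 1]. An eigenvector is thus a vector
    [w = (X, Y)] with ratios [r_+], [r_-] such that [N_+ w = r_+ M_+ w] and [M_- w = r_- N_- w].
    Eliminating the ratios yields two quadrics in [(X, Y)] that are affine in the coin parameter
    [a]; as [a_p <> a_m] (the case [a_p = a_m] would force [|r_+ r_-| = 1]) both coefficients
    vanish, which gives [lam (p X + q Y) = s e^(-2 gamma) X] and
    [lam (conj q X - p Y) = s e^(2 gamma) Y] for a sign [s]. Consequently
    [lam^2 + 2 s S lam - 1 = 0] with [S = p sinh (2 gamma)], so [lam = - s S + t sqrt (1 + S^2)]
    for a second sign [t], and the moduli of [r_+] and [r_-] are smaller than [1] exactly when
    [s a_p < s t p'_gamma < s a_m]. *)

Open Scope C_scope.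

(* Registering [C] as an integral domain makes [nsatz] available over [C]. *)
Lemma C_setoid : Setoid_Theory C (@eq C).
Proof. constructor; red; intros; subst; trivial. Qed.

#[global] Instance C_ring_ops :
  @Ring_ops C (RtoC 0) (RtoC 1) Cplus Cmult Cminus Copp (@eq C) := {}.

#[global] Instance C_ncring : @Ncring.Ring _ _ _ _ _ _ _ _ C_ring_ops.
Proof.
  constructor; try apply C_setoid;
    try (intros ? ? H1 ? ? H2; cbv in H1, H2; subst; reflexivity);
    try (intros ? ? H1; cbv in H1; subst; reflexivity);
    intros; cbv [eq_notation equality add_notation mul_notation sub_notation
      opp_notation zero_notation one_notation C_ring_ops zero one addition
      multiplication subtraction opposite];
    first [ring | apply injective_projections; simpl; ring].
Defined.

#[global] Instance C_cring : Cring (Rr := C_ncring).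
Proof.
  red; intros; cbv [eq_notation equality mul_notation C_ring_ops multiplication]; ring.
Defined.

Lemma Cmult_integral (x y : C) : x * y = 0 -> x = 0 \/ y = 0.
Proof.
  intros H. destruct (Ceq_dec x 0) as [Hx|Hx]; [now left | right].
  apply (f_equal (Cmult (/ x))) in H.
  now rewrite Cmult_assoc, Cinv_l, Cmult_1_l, Cmult_0_r in H.
Qed.

#[global] Instance C_integral_domain : Integral_domain (Rcr := C_cring).
Proof. constructor; [exact Cmult_integral | exact C1_nz]. Defined.

Lemma Cmult_eq_0_reg_l (c x : C) : c <> 0 -> c * x = 0 -> x = 0.
Proof. intros Hc H. destruct (Cmult_integral _ _ H); [contradiction | assumption]. Qed.

Lemma Cconj_neq_0 (z : C) : z <> 0 -> Cconj z <> 0.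
Proof. intros Hz. apply Cmod_gt_0. rewrite Cmod_conj. now apply Cmod_gt_0. Qed.

Lemma RtoC_neq_0 (x : R) : x <> 0%R -> RtoC x <> 0.
Proof. intros Hx E. apply Hx, (RtoC_inj _ _ E). Qed.

Lemma unit_pair_mul_conj (a : R) (b : C) :
  (a ^ 2 + Cmod b ^ 2 = 1)%R -> b * Cconj b = 1 - RtoC a * RtoC a.
Proof. intros H. rewrite <- Cmod2_conj, <- RtoC_mult, <- RtoC_minus. f_equal. lra. Qed.

Lemma unit_pair_neq_0 (a : R) (b : C) : (a ^ 2 + Cmod b ^ 2 = 1)%R -> (-1 < a < 1)%R -> b <> 0.
Proof. intros H Ha ->. rewrite Cmod_0 in H. nra. Qed.

Lemma pair_eq_iff {A B : Type} (u v : A * B) : u = v <-> fst u = fst v /\ snd u = snd v.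
Proof.
  split; [now intros -> | intros [H1 H2]; now apply injective_projections].
Qed.

Definition scale (c : C) (v : C * C) : C * C := (c * fst v, c * snd v).

Definition cross (u v : C * C) : C := fst u * snd v - snd u * fst v.

Record mat2 := Mat2 { m11 : C; m12 : C; m21 : C; m22 : C }.

Definition mat2_apply (M : mat2) (v : C * C) : C * C :=
  (m11 M * fst v + m12 M * snd v, m21 M * fst v + m22 M * snd v).

Definition mat2_det (M : mat2) : C := m11 M * m22 M - m12 M * m21 M.

Lemma scale_0 (v : C * C) : scale 0 v = (RtoC 0, RtoC 0).
Proof. unfold scale; f_equal; ring. Qed.

Lemma scale_zero (c : C) : scale c (RtoC 0, RtoC 0) = (RtoC 0, RtoC 0).
Proof. unfold scale; simpl; f_equal; ring. Qed.

Lemma mat2_apply_scale (M : mat2) (c : C) (v : C * C) :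
  mat2_apply M (scale c v) = scale c (mat2_apply M v).
Proof. unfold mat2_apply, scale; simpl; f_equal; ring. Qed.

Lemma mat2_apply_inj (M : mat2) (u v : C * C) :
  mat2_det M <> 0 -> mat2_apply M u = mat2_apply M v -> u = v.
Proof.
  destruct M as [a b c d], u as [u1 u2], v as [v1 v2].
  unfold mat2_det, mat2_apply; simpl; intros Hdet E.
  apply pair_eq_iff in E as [E1 E2]; simpl in E1, E2.
  f_equal; apply Ceq_minus, (Cmult_eq_0_reg_l (a * d - b * c)); auto; nsatz.
Qed.

Lemma mat2_apply_zero (M : mat2) : mat2_apply M (RtoC 0, RtoC 0) = (RtoC 0, RtoC 0).
Proof. unfold mat2_apply; simpl; f_equal; ring. Qed.

Lemma cross_mat2_apply (M : mat2) (u v : C * C) :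
  cross (mat2_apply M u) (mat2_apply M v) = mat2_det M * cross u v.
Proof. unfold cross, mat2_apply, mat2_det; simpl; ring. Qed.

Lemma C2_eq_zero_dec (v : C * C) : {v = (RtoC 0, RtoC 0)} + {v <> (RtoC 0, RtoC 0)}.
Proof.
  destruct v as [v1 v2], (Ceq_dec v1 0) as [->|H1], (Ceq_dec v2 0) as [->|H2];
    [left; reflexivity | right; congruence ..].
Qed.

Lemma cross_eq_0_collinear (u v : C * C) :
  u <> (RtoC 0, RtoC 0) -> cross u v = 0 -> exists c, v = scale c u.
Proof.
  destruct u as [u1 u2], v as [v1 v2]; unfold cross, scale; simpl; intros Hu H.
  destruct (Ceq_dec u1 0) as [->|H1].
  - assert (H2 : u2 <> 0) by congruence.
    exists (v2 / u2); f_equal; [| field; exact H2].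
    transitivity (RtoC 0); [| ring].
    apply (Cmult_eq_0_reg_l u2 v1 H2).
    transitivity (- (0 * v2 - u2 * v1)); [ring | rewrite H; ring].
  - exists (v1 / u1); f_equal; [field; exact H1 |].
    apply Ceq_minus, (Cmult_eq_0_reg_l u1); [exact H1 |].
    transitivity (u1 * v2 - u2 * v1); [field; exact H1 | exact H].
Qed.

Open Scope R_scope.

Lemma Cmod_lt_1_iff (r : C) (d e : R) : 0 < d -> Cmod r * d = e -> Cmod r < 1 <-> e < d.
Proof. intros Hd <-. pose proof (Cmod_ge_0 r). split; intros Hlt; nra. Qed.

Lemma sign_RtoC_sq (s : R) : s = 1 \/ s = -1 -> (RtoC s * RtoC s = 1)%C.
Proof. intros Hs. rewrite <- RtoC_mult. f_equal. destruct Hs; subst; ring. Qed.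

Lemma Rlt_iff_pow2_lt (u v : R) : 0 <= u -> 0 <= v -> u < v <-> u ^ 2 < v ^ 2.
Proof. intros Hu Hv; split; intros H; nra. Qed.

Lemma sqnorm2_nonneg (v : C * C) : 0 <= sqnorm2 v.
Proof. unfold sqnorm2; nra. Qed.

Lemma sqnorm2_pos (v : C * C) : v <> (RtoC 0, RtoC 0) -> 0 < sqnorm2 v.
Proof.
  destruct v as [v1 v2]; unfold sqnorm2; simpl; intros Hv.
  destruct (Ceq_dec v1 0) as [->|H1].
  - assert (H2 : 0 < Cmod v2) by (apply Cmod_gt_0; congruence). nra.
  - apply Cmod_gt_0 in H1. nra.
Qed.

Lemma sqnorm2_scale (c : C) (v : C * C) : sqnorm2 (scale c v) = Cmod c ^ 2 * sqnorm2 v.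
Proof. unfold sqnorm2, scale; simpl; rewrite !Cmod_mult; ring. Qed.

Lemma Cmod_cross_le (u v : C * C) : Cmod (cross u v) <= sqnorm2 u + sqnorm2 v.
Proof.
  destruct u as [u1 u2], v as [v1 v2]; unfold cross, sqnorm2; simpl.
  unfold Cminus; eapply Rle_trans; [apply Cmod_triangle |].
  rewrite Cmod_opp, !Cmod_mult.
  pose proof (pow2_ge_0 (Cmod u1 - Cmod v2)); pose proof (pow2_ge_0 (Cmod u2 - Cmod v1)).
  nra.
Qed.

Lemma le_0_of_is_lim_seq_0 (c : R) (u : nat -> R) :
  (forall n, c <= u n) -> is_lim_seq u 0 -> c <= 0.
Proof.
  intros Hc Hu. exact (is_lim_seq_le (fun _ => c) u c 0 Hc (is_lim_seq_const c) Hu).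
Qed.

Lemma geometric_ratio_lt_1 (v : nat -> C * C) (r : C) :
  (forall n, v (S n) = scale r (v n)) -> v 0%nat <> (RtoC 0, RtoC 0) ->
  is_lim_seq (fun n => sqnorm2 (v n)) 0 -> Cmod r < 1.
Proof.
  intros Hv H0 Hlim. destruct (Rlt_le_dec (Cmod r) 1) as [|Hr]; [assumption | exfalso].
  assert (Hmono : forall n, sqnorm2 (v 0%nat) <= sqnorm2 (v n)).
  { induction n as [|n IH]; [lra |].
    rewrite Hv, sqnorm2_scale. pose proof (sqnorm2_nonneg (v n)).
    assert (1 <= Cmod r ^ 2) by nra. nra. }
  pose proof (le_0_of_is_lim_seq_0 _ _ Hmono Hlim). pose proof (sqnorm2_pos _ H0). lra.
Qed.

Lemma geometric_from_zero (v : nat -> C * C) (r : C) :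
  (forall n, v (S n) = scale r (v n)) -> v 0%nat = (RtoC 0, RtoC 0) ->
  forall n, v n = (RtoC 0, RtoC 0).
Proof.
  intros Hv H0. induction n as [|n IH]; [exact H0 |]. now rewrite Hv, IH, scale_zero.
Qed.

Section Transfer.

Variables (M N : mat2) (v : nat -> C * C).
Hypothesis HM : mat2_det M <> 0.
Hypothesis Hrec : forall n, mat2_apply M (v (S n)) = mat2_apply N (v n).

Lemma transfer_scale_propagates (r : C) :
  v 1%nat = scale r (v 0%nat) -> forall n, v (S n) = scale r (v n).
Proof.
  intros H1. induction n as [|n IH]; [exact H1 |].
  apply (mat2_apply_inj M); [exact HM |].
  rewrite mat2_apply_scale, !Hrec, IH, mat2_apply_scale. reflexivity.
Qed.

Lemma transfer_cross_vanishes :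
  Cmod (mat2_det M) <= Cmod (mat2_det N) ->
  is_lim_seq (fun n => sqnorm2 (v n)) 0 -> cross (v 0%nat) (v 1%nat) = 0%C.
Proof.
  intros Hdet Hlim.
  set (W n := cross (v n) (v (S n))).
  assert (HW : forall n, Cmod (W n) <= Cmod (W (S n))).
  { intros n.
    assert (E : (mat2_det M * W (S n) = mat2_det N * W n)%C).
    { unfold W. rewrite <- !cross_mat2_apply, !Hrec. reflexivity. }
    apply (f_equal Cmod) in E. rewrite !Cmod_mult in E.
    apply (Rmult_le_reg_l (Cmod (mat2_det M))); [now apply Cmod_gt_0 |].
    rewrite E. apply Rmult_le_compat_r; [apply Cmod_ge_0 | exact Hdet]. }
  assert (Hbound : forall n, Cmod (W 0%nat) <= sqnorm2 (v n) + sqnorm2 (v (S n))).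
  { intros n. apply (Rle_trans _ (Cmod (W n))); [| apply Cmod_cross_le].
    induction n as [|n IH]; [lra | eapply Rle_trans; [exact IH | apply HW]]. }
  apply Cmod_eq_0, Rle_antisym; [| apply Cmod_ge_0].
  apply (le_0_of_is_lim_seq_0 _ _ Hbound).
  replace 0 with (0 + 0) by ring.
  apply is_lim_seq_plus'; [exact Hlim | exact (proj1 (is_lim_seq_incr_1 _ _) Hlim)].
Qed.

Lemma transfer_decay_geometric :
  Cmod (mat2_det M) <= Cmod (mat2_det N) ->
  is_lim_seq (fun n => sqnorm2 (v n)) 0 ->
  exists r, Cmod r < 1 /\ forall n, v (S n) = scale r (v n).
Proof.
  intros Hdet Hlim. destruct (C2_eq_zero_dec (v 0%nat)) as [H0|H0].
  - exists (RtoC 0). split; [rewrite Cmod_0; lra |].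
    apply transfer_scale_propagates.
    rewrite H0, scale_zero. apply (mat2_apply_inj M); [exact HM |].
    rewrite Hrec, H0, !mat2_apply_zero. reflexivity.
  - destruct (cross_eq_0_collinear _ _ H0 (transfer_cross_vanishes Hdet Hlim)) as [r Hr].
    exists r. pose proof (transfer_scale_propagates r Hr) as Hv.
    split; [exact (geometric_ratio_lt_1 v r Hv H0 Hlim) | exact Hv].
Qed.

End Transfer.

Section Walk.

Variables (gamma p : R) (q : C).

Lemma shift_op_ext (Phi Phi' : Z -> C * C) (x : Z) :
  (forall z, Phi z = Phi' z) -> shift_op p q Phi x = shift_op p q Phi' x.
Proof. intros H; unfold shift_op; rewrite !H; reflexivity. Qed.

Lemma shift_op_scale (c : C) (Phi : Z -> C * C) (x : Z) :
  shift_op p q (fun z => scale c (Phi z)) x = scale c (shift_op p q Phi x).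
Proof. unfold shift_op, scale; simpl; f_equal; ring. Qed.

Lemma shift_op_involutive (Phi : Z -> C * C) (x : Z) :
  p ^ 2 + Cmod q ^ 2 = 1 -> shift_op p q (shift_op p q Phi) x = Phi x.
Proof.
  intros Hpq.
  assert (Hq : (RtoC p * RtoC p + q * Cconj q = 1)%C).
  { rewrite <- Cmod2_conj, <- RtoC_mult, <- RtoC_plus. f_equal. lra. }
  (* [nsatz] rejects a context mixing equations over [R] and over [C]. *)
  clear Hpq; unfold shift_op; simpl.
  replace (x + 1 - 1)%Z with x by lia. replace (x - 1 + 1)%Z with x by lia.
  apply pair_eq_iff; simpl; split; nsatz.
Qed.

Lemma exp_2gamma_inv : exp (-2 * gamma) * exp (2 * gamma) = 1.
Proof. rewrite <- exp_plus, <- exp_0. f_equal. ring. Qed.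

Lemma RtoC_exp_2gamma_inv : (RtoC (exp (-2 * gamma)) * RtoC (exp (2 * gamma)) = 1)%C.
Proof. rewrite <- RtoC_mult, exp_2gamma_inv. reflexivity. Qed.

Definition coin_eq (a : Z -> R) (b : Z -> C) (lam : C) (Psi : Z -> C * C) (x : Z) : Prop :=
  coin_op gamma a b Psi x = scale lam (shift_op p q Psi x).

Lemma eigen_iff_coin_eq (a : Z -> R) (b : Z -> C) (lam : C) (Psi : Z -> C * C) :
  p ^ 2 + Cmod q ^ 2 = 1 ->
  (forall x, shift_op p q (coin_op gamma a b Psi) x = scale lam (Psi x)) <->
  (forall x, coin_eq a b lam Psi x).
Proof.
  intros Hpq; split; intros H x; unfold coin_eq in *.
  - rewrite <- (shift_op_involutive (coin_op gamma a b Psi) x Hpq).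
    rewrite (shift_op_ext _ (fun z => scale lam (Psi z)) x H).
    apply shift_op_scale.
  - rewrite (shift_op_ext _ (fun z => scale lam (shift_op p q Psi z)) x H).
    rewrite shift_op_scale, shift_op_involutive by exact Hpq. reflexivity.
Qed.

Definition coin_mat (a : R) (b : C) : mat2 :=
  Mat2 (RtoC (exp (-2 * gamma) * a)) (Cconj b) b (- RtoC (exp (2 * gamma) * a)).

Lemma coin_op_mat2 (a : Z -> R) (b : Z -> C) (Psi : Z -> C * C) (x : Z) :
  coin_op gamma a b Psi x = mat2_apply (coin_mat (a x) (b x)) (Psi x).
Proof. unfold coin_op, coin_mat, mat2_apply; simpl; f_equal; ring. Qed.

Lemma coin_mat_det (a : R) (b : C) :
  a ^ 2 + Cmod b ^ 2 = 1 -> mat2_det (coin_mat a b) = RtoC (- 1).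
Proof.
  intros Hab. unfold mat2_det, coin_mat; simpl.
  transitivity (RtoC (- (exp (-2 * gamma) * exp (2 * gamma) * a ^ 2 + Cmod b ^ 2))).
  - rewrite RtoC_opp, RtoC_plus, !RtoC_mult, RtoC_pow, Cmod2_conj. ring.
  - rewrite exp_2gamma_inv, Rmult_1_l, Hab. reflexivity.
Qed.

Lemma coin_op_eq_zero (a : Z -> R) (b : Z -> C) (Psi : Z -> C * C) (x : Z) :
  a x ^ 2 + Cmod (b x) ^ 2 = 1 ->
  coin_op gamma a b Psi x = (RtoC 0, RtoC 0) -> Psi x = (RtoC 0, RtoC 0).
Proof.
  intros Hab H. apply (mat2_apply_inj (coin_mat (a x) (b x))).
  - rewrite coin_mat_det by exact Hab. intros E. apply RtoC_inj in E. lra.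
  - rewrite <- coin_op_mat2, mat2_apply_zero. exact H.
Qed.

Definition transfer_M (lam : C) (a : R) (b : C) : mat2 :=
  Mat2 (RtoC (exp (-2 * gamma)) * RtoC a - lam * RtoC p) (- (lam * q)) b 0.

Definition transfer_N (lam : C) (a : R) (b : C) : mat2 :=
  Mat2 0 (- Cconj b) (lam * Cconj q) (RtoC (exp (2 * gamma)) * RtoC a - lam * RtoC p).

Definition stagger (Psi : Z -> C * C) (z : Z) : C * C := (fst (Psi (z - 1)%Z), snd (Psi z)).

Lemma coin_eq_iff_transfer (a : Z -> R) (b : Z -> C) (lam : C) (Psi : Z -> C * C) (x : Z) :
  coin_eq a b lam Psi x <->
  mat2_apply (transfer_M lam (a x) (b x)) (stagger Psi (x + 1)) =
  mat2_apply (transfer_N lam (a x) (b x)) (stagger Psi x).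
Proof.
  unfold coin_eq, coin_op, shift_op, transfer_M, transfer_N, stagger, mat2_apply, scale.
  replace (x + 1 - 1)%Z with x by lia.
  rewrite !pair_eq_iff, !RtoC_mult; simpl.
  split; intros [E1 E2]; split; nsatz.
Qed.

Lemma transfer_det_M (lam : C) (a : R) (b : C) : mat2_det (transfer_M lam a b) = (lam * q * b)%C.
Proof. unfold mat2_det; simpl; ring. Qed.

Lemma transfer_det_N (lam : C) (a : R) (b : C) :
  mat2_det (transfer_N lam a b) = (lam * Cconj q * Cconj b)%C.
Proof. unfold mat2_det; simpl; ring. Qed.

Lemma Cmod_transfer_det (lam : C) (a : R) (b : C) :
  Cmod (mat2_det (transfer_M lam a b)) = Cmod (mat2_det (transfer_N lam a b)).
Proof. rewrite transfer_det_M, transfer_det_N, !Cmod_mult, !Cmod_conj. reflexivity. Qed.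

End Walk.

Definition geom (rp rm : C) (k : Z) : C :=
  if (0 <=? k)%Z then Cpow rp (Z.to_nat k) else Cpow rm (Z.to_nat (- k)).

Definition profile (rp rm : C) (w : C * C) (z : Z) : C * C :=
  (geom rp rm (z + 1) * fst w, geom rp rm z * snd w)%C.

Lemma geom_of_nat (rp rm : C) (n : nat) : geom rp rm (Z.of_nat n) = Cpow rp n.
Proof.
  unfold geom. destruct (Z.leb_spec 0 (Z.of_nat n)); [| lia]. now rewrite Nat2Z.id.
Qed.

Lemma geom_opp_nat (rp rm : C) (n : nat) : geom rp rm (- Z.of_nat n) = Cpow rm n.
Proof.
  unfold geom. destruct n as [|n]; [reflexivity |].
  destruct (Z.leb_spec 0 (- Z.of_nat (S n))); [lia |]. now rewrite Z.opp_involutive, Nat2Z.id.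
Qed.

Lemma geom_succ_nonneg (rp rm : C) (k : Z) :
  (0 <= k)%Z -> geom rp rm (k + 1) = (rp * geom rp rm k)%C.
Proof.
  intros Hk. rewrite <- (Z2Nat.id k Hk).
  replace (Z.of_nat (Z.to_nat k) + 1)%Z with (Z.of_nat (S (Z.to_nat k))) by lia.
  rewrite !geom_of_nat. reflexivity.
Qed.

Lemma geom_pred_neg (rp rm : C) (k : Z) :
  (k < 0)%Z -> geom rp rm k = (rm * geom rp rm (k + 1))%C.
Proof.
  intros Hk. replace k with (- Z.of_nat (S (Z.to_nat (- k - 1))))%Z by lia.
  replace (- Z.of_nat (S (Z.to_nat (- k - 1))) + 1)%Z with (- Z.of_nat (Z.to_nat (- k - 1)))%Z
    by lia.
  rewrite !geom_opp_nat. reflexivity.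
Qed.

Lemma stagger_profile (rp rm : C) (w : C * C) (z : Z) :
  stagger (profile rp rm w) z = scale (geom rp rm z) w.
Proof. unfold stagger, profile, scale; simpl. now replace (z - 1 + 1)%Z with z by lia. Qed.

Lemma profile_of_nat (rp rm : C) (w : C * C) (n : nat) :
  profile rp rm w (Z.of_nat n) = scale (Cpow rp n) (rp * fst w, snd w)%C.
Proof.
  unfold profile, scale; simpl.
  replace (Z.of_nat n + 1)%Z with (Z.of_nat (S n)) by lia.
  rewrite !geom_of_nat, Cpow_S. f_equal; ring.
Qed.

Lemma profile_opp_nat (rp rm : C) (w : C * C) (n : nat) :
  profile rp rm w (- Z.of_nat n - 1) = scale (Cpow rm n) (fst w, rm * snd w)%C.
Proof.
  unfold profile, scale; simpl.
  replace (- Z.of_nat n - 1 + 1)%Z with (- Z.of_nat n)%Z by lia.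
  replace (- Z.of_nat n - 1)%Z with (- Z.of_nat (S n))%Z by lia.
  rewrite !geom_opp_nat, Cpow_S. f_equal; ring.
Qed.

Lemma ex_series_sqnorm2_geometric (r : C) (v : C * C) :
  Cmod r < 1 -> ex_series (fun n => sqnorm2 (scale (Cpow r n) v)).
Proof.
  intros Hr.
  apply (ex_series_ext (fun n => scal (sqnorm2 v) ((Cmod r ^ 2) ^ n))).
  { intros n. rewrite sqnorm2_scale, Cmod_pow, <- !pow_mult, Nat.mul_comm.
    unfold scal; simpl; unfold mult; simpl; ring. }
  apply (@ex_series_scal_l R_AbsRing R_NormedModule), ex_series_geom.
  pose proof (Cmod_ge_0 r). rewrite Rabs_pos_eq by nra. nra.
Qed.

Lemma profile_l2 (rp rm : C) (w : C * C) :
  Cmod rp < 1 -> Cmod rm < 1 -> is_l2 (profile rp rm w).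
Proof.
  intros Hrp Hrm. split.
  - apply (ex_series_ext (fun n => sqnorm2 (scale (Cpow rp n) (rp * fst w, snd w)%C))).
    { intros n. now rewrite profile_of_nat. }
    now apply ex_series_sqnorm2_geometric.
  - apply (ex_series_ext (fun n => sqnorm2 (scale (Cpow rm n) (fst w, rm * snd w)%C))).
    { intros n. now rewrite profile_opp_nat. }
    now apply ex_series_sqnorm2_geometric.
Qed.

Lemma profile_nonzero (rp rm : C) (w : C * C) :
  w <> (RtoC 0, RtoC 0) -> exists x, profile rp rm w x <> (RtoC 0, RtoC 0).
Proof.
  destruct w as [X Y]; intros Hw.
  destruct (Ceq_dec X 0) as [->|HX].
  - exists 0%Z. rewrite (profile_of_nat rp rm _ 0). unfold scale; simpl.
    intros E. apply pair_eq_iff in E as [_ HY]; simpl in HY.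
    apply Hw. f_equal. rewrite <- HY. ring.
  - exists (-1)%Z. rewrite (profile_opp_nat rp rm _ 0). unfold scale; simpl.
    intros E. apply pair_eq_iff in E as [HX0 _]; simpl in HX0.
    apply HX. rewrite <- HX0. ring.
Qed.

Lemma stagger_sqnorm2_le (Psi : Z -> C * C) (z : Z) :
  sqnorm2 (stagger Psi z) <= sqnorm2 (Psi (z - 1)%Z) + sqnorm2 (Psi z).
Proof.
  unfold stagger, sqnorm2; simpl.
  pose proof (pow2_ge_0 (Cmod (snd (Psi (z - 1)%Z)))).
  pose proof (pow2_ge_0 (Cmod (fst (Psi z)))). lra.
Qed.

Lemma stagger_decay (Psi : Z -> C * C) (f : nat -> Z) :
  is_lim_seq (fun n => sqnorm2 (Psi (f n - 1)%Z)) 0 ->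
  is_lim_seq (fun n => sqnorm2 (Psi (f n))) 0 ->
  is_lim_seq (fun n => sqnorm2 (stagger Psi (f n))) 0.
Proof.
  intros H1 H2. apply (is_lim_seq_le_le (fun _ => 0)
    _ (fun n => sqnorm2 (Psi (f n - 1)%Z) + sqnorm2 (Psi (f n)))).
  - intros n. split; [apply sqnorm2_nonneg | apply stagger_sqnorm2_le].
  - apply is_lim_seq_const.
  - replace (Finite 0) with (Rbar_plus 0 0) by (simpl; f_equal; ring).
    now apply is_lim_seq_plus'.
Qed.

Lemma l2_stagger_decay (Psi : Z -> C * C) :
  is_l2 Psi ->
  is_lim_seq (fun n => sqnorm2 (stagger Psi (Z.of_nat n))) 0 /\
  is_lim_seq (fun n => sqnorm2 (stagger Psi (- Z.of_nat n))) 0.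
Proof.
  intros [Hr Hl]. apply ex_series_lim_0 in Hr, Hl. split; apply stagger_decay.
  - apply is_lim_seq_incr_1.
    apply (is_lim_seq_ext (fun n => sqnorm2 (Psi (Z.of_nat n)))); [| exact Hr].
    intros n. now replace (Z.of_nat (S n) - 1)%Z with (Z.of_nat n) by lia.
  - exact Hr.
  - exact Hl.
  - apply is_lim_seq_incr_1.
    apply (is_lim_seq_ext (fun n => sqnorm2 (Psi (- Z.of_nat n - 1)%Z))); [| exact Hl].
    intros n. now replace (- Z.of_nat (S n))%Z with (- Z.of_nat n - 1)%Z by lia.
Qed.

Lemma stagger_eq_zero (Psi : Z -> C * C) :
  (forall n, stagger Psi (Z.of_nat n) = (RtoC 0, RtoC 0)) ->
  (forall n, stagger Psi (- Z.of_nat n) = (RtoC 0, RtoC 0)) ->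
  forall x, Psi x = (RtoC 0, RtoC 0).
Proof.
  intros Hr Hl.
  assert (H : forall z, stagger Psi z = (RtoC 0, RtoC 0)).
  { intros z. destruct (Z_le_gt_dec 0 z).
    - rewrite <- (Z2Nat.id z) by lia. apply Hr.
    - replace z with (- Z.of_nat (Z.to_nat (- z)))%Z by lia. apply Hl. }
  intros x. pose proof (H (x + 1)%Z) as H1. pose proof (H x) as H2.
  unfold stagger in H1, H2. replace (x + 1 - 1)%Z with x in H1 by lia.
  apply injective_projections; [apply (f_equal fst H1) | apply (f_equal snd H2)].
Qed.

Lemma two_phase_nonneg {T : Type} (vp vm : T) (x : Z) : (0 <= x)%Z -> two_phase vp vm x = vp.
Proof. intros H. unfold two_phase. destruct (Z.leb_spec 0 x); [reflexivity | lia]. Qed.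

Lemma two_phase_neg {T : Type} (vp vm : T) (x : Z) : (x < 0)%Z -> two_phase vp vm x = vm.
Proof. intros H. unfold two_phase. destruct (Z.leb_spec 0 x); [lia | reflexivity]. Qed.

Section TwoPhase.

Variables (gamma p : R) (q : C) (ap am : R) (bp bm : C).

Local Notation M := (transfer_M gamma p q).
Local Notation N := (transfer_N gamma p q).
Local Notation coin_eq2 := (coin_eq gamma p q (two_phase ap am) (two_phase bp bm)).

Definition interface_eq (lam rp rm : C) (w : C * C) : Prop :=
  scale rp (mat2_apply (M lam ap bp) w) = mat2_apply (N lam ap bp) w /\
  mat2_apply (M lam am bm) w = scale rm (mat2_apply (N lam am bm) w).

Lemma profile_coin_eq (lam rp rm : C) (w : C * C) :
  interface_eq lam rp rm w -> forall x, coin_eq2 lam (profile rp rm w) x.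
Proof.
  intros [Hright Hleft] x. apply coin_eq_iff_transfer.
  rewrite !stagger_profile, !mat2_apply_scale.
  destruct (Z_le_gt_dec 0 x) as [Hx|Hx].
  - rewrite (two_phase_nonneg ap am), (two_phase_nonneg bp bm), geom_succ_nonneg by lia.
    rewrite <- Hright. unfold scale; simpl; f_equal; ring.
  - rewrite (two_phase_neg ap am), (two_phase_neg bp bm), (geom_pred_neg rp rm x) by lia.
    rewrite Hleft. unfold scale; simpl; f_equal; ring.
Qed.

Lemma coin_eq_interface (lam : C) (Psi : Z -> C * C) :
  lam <> 0%C -> q <> 0%C -> bp <> 0%C -> bm <> 0%C ->
  is_l2 Psi -> (exists x, Psi x <> (RtoC 0, RtoC 0)) -> (forall x, coin_eq2 lam Psi x) ->
  exists rp rm w, Cmod rp < 1 /\ Cmod rm < 1 /\ w <> (RtoC 0, RtoC 0) /\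
    interface_eq lam rp rm w.
Proof.
  intros Hlam Hq Hbp Hbm Hl2 [x0 Hx0] Hcoin.
  destruct (l2_stagger_decay Psi Hl2) as [Hdecr Hdecl].
  set (v n := stagger Psi (Z.of_nat n)) in Hdecr.
  set (u n := stagger Psi (- Z.of_nat n)) in Hdecl.
  assert (Hrecr : forall n, mat2_apply (M lam ap bp) (v (S n)) = mat2_apply (N lam ap bp) (v n)).
  { intros n. unfold v. rewrite Nat2Z.inj_succ, <- Z.add_1_r.
    rewrite <- (two_phase_nonneg ap am (Z.of_nat n)), <- (two_phase_nonneg bp bm (Z.of_nat n))
      by lia.
    apply coin_eq_iff_transfer, Hcoin. }
  assert (Hrecl : forall n, mat2_apply (N lam am bm) (u (S n)) = mat2_apply (M lam am bm) (u n)).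
  { intros n. unfold u. 
    replace (- Z.of_nat n)%Z with (- Z.of_nat (S n) + 1)%Z by lia.
    rewrite <- (two_phase_neg ap am (- Z.of_nat (S n))), <- (two_phase_neg bp bm (- Z.of_nat (S n)))
      by lia.
    symmetry. apply coin_eq_iff_transfer, Hcoin. }
  assert (HdetM : mat2_det (M lam ap bp) <> 0%C).
  { rewrite transfer_det_M. now repeat apply Cmult_neq_0. }
  assert (HdetN : mat2_det (N lam am bm) <> 0%C).
  { rewrite transfer_det_N. now repeat apply Cmult_neq_0; try apply Cconj_neq_0. }
  destruct (transfer_decay_geometric _ _ v HdetM Hrecr) as [rp [Hrp Hv]];
    [rewrite Cmod_transfer_det; apply Rle_refl | exact Hdecr |].
  destruct (transfer_decay_geometric _ _ u HdetN Hrecl) as [rm [Hrm Hu]];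
    [rewrite Cmod_transfer_det; apply Rle_refl | exact Hdecl |].
  exists rp, rm, (stagger Psi 0). split; [exact Hrp |]. split; [exact Hrm |]. split.
  - intros Hw. apply Hx0. apply stagger_eq_zero.
    + exact (geometric_from_zero v rp Hv Hw).
    + exact (geometric_from_zero u rm Hu Hw).
  - split.
    + rewrite <- mat2_apply_scale. change (stagger Psi 0) with (v 0%nat).
      rewrite <- Hv. apply Hrecr.
    + rewrite <- mat2_apply_scale. change (stagger Psi 0) with (u 0%nat). rewrite <- Hu.
      symmetry. apply Hrecl.
Qed.

End TwoPhase.

Lemma Cmod_contraction_eq_0 (c d r Y : C) :
  Cmod c = Cmod d -> d <> 0%C -> Cmod r < 1 -> (c * Y = r * (d * Y))%C -> Y = 0%C.
Proof.
  intros Hcd Hd Hr E. apply (f_equal Cmod) in E. rewrite !Cmod_mult, Hcd in E.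
  apply Cmod_gt_0 in Hd. apply Cmod_eq_0.
  assert (H0 : Cmod d * (1 - Cmod r) * Cmod Y = 0) by lra.
  destruct (Rmult_integral _ _ H0) as [H1|]; [| assumption].
  destruct (Rmult_integral _ _ H1); lra.
Qed.

Lemma sign_relations (alpha beta X Y D N : C) :
  (alpha * beta = 1)%C -> X <> 0%C -> Y <> 0%C ->
  (D * N = X * Y)%C -> (beta * Y * D = alpha * X * N)%C ->
  exists s : R, (s = 1 \/ s = -1) /\ D = (RtoC s * alpha * X)%C /\ N = (RtoC s * beta * Y)%C.
Proof.
  intros Hab HX HY HK HL.
  assert (Ha : alpha <> 0%C) by (intros E; rewrite E, Cmult_0_l in Hab; now apply C1_nz).
  assert (Hb : beta <> 0%C) by (intros E; rewrite E, Cmult_0_r in Hab; now apply C1_nz).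
  assert (Hsq : ((D - alpha * X) * (D + alpha * X) = 0)%C).
  { apply (Cmult_eq_0_reg_l (beta * Y)); [now apply Cmult_neq_0 | nsatz]. }
  assert (HN : forall s : R, D = (RtoC s * alpha * X)%C -> N = (RtoC s * beta * Y)%C).
  { intros s Hs. apply Ceq_minus, (Cmult_eq_0_reg_l (alpha * X)); [now apply Cmult_neq_0 | nsatz]. }
  destruct (Cmult_integral _ _ Hsq) as [E|E].
  - exists 1. split; [now left |]. assert (Hs : D = (RtoC 1 * alpha * X)%C) by nsatz.
    split; [exact Hs | exact (HN 1 Hs)].
  - exists (-1). split; [now right |].
    assert (Hm1 : RtoC (-1) = (- RtoC 1)%C) by (apply injective_projections; simpl; ring).
    assert (Hs : D = (RtoC (-1) * alpha * X)%C) by nsatz.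
    split; [exact Hs | exact (HN (-1) Hs)].
Qed.

Lemma quadratic_roots_real (lam : C) (k r : R) :
  r ^ 2 = 1 + k ^ 2 -> (lam * lam + RtoC (2 * k) * lam - 1 = 0)%C ->
  exists t : R, (t = 1 \/ t = -1) /\ lam = RtoC (- k + t * r).
Proof.
  intros Hr Hq.
  assert (Hr' : (RtoC r * RtoC r = 1 + RtoC k * RtoC k)%C).
  { rewrite <- !RtoC_mult, <- RtoC_plus. f_equal. lra. }
  assert (E : ((lam - RtoC (- k + r)) * (lam - RtoC (- k - r)) = 0)%C).
  { assert (H2 : RtoC 2 = (1 + 1)%C) by (rewrite <- RtoC_plus; f_equal; ring).
    rewrite RtoC_plus, RtoC_minus, RtoC_opp. rewrite RtoC_mult in Hq. clear Hr. nsatz. }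
  destruct (Cmult_integral _ _ E) as [E1|E1]; apply Ceq_minus in E1.
  - exists 1. split; [now left |]. rewrite E1. f_equal. ring.
  - exists (-1). split; [now right |]. rewrite E1. f_equal. ring.
Qed.

(* On an eigenvector [(alpha |X| / |Y|)^2 = (r + s t p c) / (r - s t p c)], which is how the
   threshold [p'_gamma = p c / r] arises. *)
Lemma threshold_identity (alpha beta p S c r s t : R) :
  alpha * beta = 1 -> 2 * S = p * (beta - alpha) -> 2 * c = alpha + beta ->
  r ^ 2 = 1 + S ^ 2 -> s ^ 2 = 1 -> t ^ 2 = 1 ->
  alpha ^ 2 * (- s * S + t * r) ^ 2 * (1 - p ^ 2) * (r - s * t * p * c) =
  (s * alpha - (- s * S + t * r) * p) ^ 2 * (r + s * t * p * c).
Proof. intros; simpl in *; nsatz. Qed.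

Lemma coin_threshold (s a k A B : R) :
  (s = 1 \/ s = -1) -> -1 < a < 1 -> 0 <= A -> 0 < B -> A * (1 - k) = B * (1 + k) ->
  ((1 - a ^ 2) * B < A * (s - a) ^ 2 <-> s * a < k) /\
  (A * (s - a) ^ 2 < (1 - a ^ 2) * B <-> k < s * a).
Proof.
  intros Hs Ha HA HB Hk.
  assert (Hk1 : 0 < 1 - k) by nra.
  assert (Hsa : 0 < 1 - s * a) by (destruct Hs; subst; lra).
  assert (E : (1 - k) * ((1 - a ^ 2) * B - A * (s - a) ^ 2) = 2 * B * (1 - s * a) * (s * a - k)).
  { assert (Hs2 : s * s = 1) by (destruct Hs; subst; ring). clear - Hk Hs2. simpl. nsatz. }
  assert (Hpos : 0 < 2 * B * (1 - s * a)) by nra.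
  split; split; intros H; nra.
Qed.

(* [t = 1] describes [sigma_+] and [t = -1] describes [sigma_-]; [s = -1] is the case
   [a_m < +-p'_gamma < a_p]. *)
Definition in_sigma_signs (gamma p : R) (q : C) (ap am : R) (lam : C) : Prop :=
  exists s t : R, (s = 1 \/ s = -1) /\ (t = 1 \/ t = -1) /\
    lam = RtoC (- s * (p * sinh (2 * gamma)) + t * sqrt (1 + (p * sinh (2 * gamma)) ^ 2)) /\
    s * ap < s * t * p_gamma' gamma p q < s * am.

Lemma sigma_iff_signs (gamma p : R) (q : C) (ap am : R) (lam : C) :
  in_sigma_minus gamma p q ap am lam \/ in_sigma_plus gamma p q ap am lam <->
  in_sigma_signs gamma p q ap am lam.
Proof.
  unfold in_sigma_minus, in_sigma_plus, in_sigma_signs, lambda_minus, lambda_plus.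
  set (S := p * sinh (2 * gamma)). set (k := p_gamma' gamma p q).
  replace ((- S) ^ 2) with (S ^ 2) by ring.
  split.
  - intros [[[H ->]|[H ->]]|[[H ->]|[H ->]]].
    + exists (-1), (-1). repeat split; [now right | now right | f_equal; ring | lra | lra].
    + exists 1, (-1). repeat split; [now left | now right | f_equal; ring | lra | lra].
    + exists (-1), 1. repeat split; [now right | now left | f_equal; ring | lra | lra].
    + exists 1, 1. repeat split; [now left | now left | f_equal; ring | lra | lra].
  - intros (s & t & [-> | ->] & [-> | ->] & -> & H1 & H2).
    + right; right. split; [lra | f_equal; ring].
    + left; right. split; [lra | f_equal; ring].
    + right; left. split; [lra | f_equal; ring].
    + left; left. split; [lra | f_equal; ring].
Qed.

Section Spectrum.

Variables (gamma p : R) (q : C).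
Hypothesis Hp : -1 < p < 1.
Hypothesis Hpq : p ^ 2 + Cmod q ^ 2 = 1.

Local Notation alpha := (exp (-2 * gamma)).
Local Notation beta := (exp (2 * gamma)).
Local Notation S := (p * sinh (2 * gamma)).
Local Notation disc := (sqrt (1 + S ^ 2)).
Local Notation c := (cosh (2 * gamma)).
Local Notation root s t := (- s * S + t * disc).

Lemma p_sinh_eq : 2 * S = p * (beta - alpha).
Proof. unfold sinh. replace (- (2 * gamma)) with (-2 * gamma) by ring. field. Qed.

Lemma cosh_exp_eq : 2 * c = alpha + beta.
Proof. unfold cosh. replace (- (2 * gamma)) with (-2 * gamma) by ring. field. Qed.

Lemma disc_sq : disc ^ 2 = 1 + S ^ 2.
Proof. rewrite pow2_sqrt; [reflexivity | nra]. Qed.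

Lemma disc_pos : 0 < disc.
Proof. apply sqrt_lt_R0. nra. Qed.

Lemma pc_sq : (p * c) ^ 2 = p ^ 2 + S ^ 2.
Proof.
  pose proof exp_2gamma_inv gamma as Hab. pose proof p_sinh_eq as HS. pose proof cosh_exp_eq as Hc.
  simpl. nsatz.
Qed.

Lemma pc_sq_lt_disc_sq : (p * c) ^ 2 < disc ^ 2.
Proof. rewrite pc_sq, disc_sq. nra. Qed.

Lemma p_gamma'_eq : p_gamma' gamma p q = p * c / disc.
Proof.
  unfold p_gamma'. pose proof disc_pos as Hr. pose proof pc_sq as Hpc.
  assert (Hc0 : 0 < c) by (pose proof cosh_exp_eq; pose proof (exp_pos (-2 * gamma));
    pose proof (exp_pos (2 * gamma)); lra).
  assert (E : p ^ 2 + Cmod q ^ 2 / c ^ 2 = (disc / c) ^ 2).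
  { replace (Cmod q ^ 2) with (1 - p ^ 2) by lra.
    field_simplify_eq; [| lra]. rewrite disc_sq. nra. }
  rewrite E, sqrt_pow2 by (apply Rlt_le, Rdiv_lt_0_compat; lra).
  field. lra.
Qed.

Lemma root_quadratic (s t : R) :
  (s = 1 \/ s = -1) -> (t = 1 \/ t = -1) ->
  root s t * root s t + 2 * (s * S) * root s t - 1 = 0.
Proof.
  intros Hs Ht. pose proof disc_sq as Hr.
  assert (s * s = 1) by (destruct Hs; subst; ring).
  assert (t * t = 1) by (destruct Ht; subst; ring).
  simpl in Hr. nsatz.
Qed.

Lemma root_neq_0 (s t : R) : (s = 1 \/ s = -1) -> (t = 1 \/ t = -1) -> root s t <> 0.
Proof. intros Hs Ht E. pose proof (root_quadratic s t Hs Ht) as H. rewrite E in H. lra. Qed.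

Lemma threshold_relation (s t : R) :
  (s = 1 \/ s = -1) -> (t = 1 \/ t = -1) ->
  alpha ^ 2 * root s t ^ 2 * (1 - p ^ 2) * (1 - s * t * p_gamma' gamma p q) =
  (s * alpha - root s t * p) ^ 2 * (1 + s * t * p_gamma' gamma p q).
Proof.
  intros Hs Ht. pose proof disc_pos as Hr.
  assert (Hs2 : s ^ 2 = 1) by (destruct Hs; subst; ring).
  assert (Ht2 : t ^ 2 = 1) by (destruct Ht; subst; ring).
  pose proof (threshold_identity alpha beta p S c disc s t (exp_2gamma_inv gamma)
    p_sinh_eq cosh_exp_eq disc_sq Hs2 Ht2) as E.
  rewrite p_gamma'_eq. apply (Rmult_eq_reg_r disc); [| lra].
  transitivity (alpha ^ 2 * root s t ^ 2 * (1 - p ^ 2) * (disc - s * t * p * c)); [field; lra |].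
  rewrite E. field. lra.
Qed.

Lemma p_gamma'_sq_lt_1 : p_gamma' gamma p q ^ 2 < 1.
Proof.
  rewrite p_gamma'_eq. pose proof disc_pos as Hr. pose proof pc_sq_lt_disc_sq as Hlt.
  assert (Hk : p * c / disc * disc = p * c) by (field; lra).
  rewrite <- Hk in Hlt. nra.
Qed.

Lemma root_gap_neq_0 (s t : R) :
  (s = 1 \/ s = -1) -> (t = 1 \/ t = -1) -> s * alpha - root s t * p <> 0.
Proof.
  intros Hs Ht E. pose proof (threshold_relation s t Hs Ht) as H. rewrite E in H.
  assert (Hk : s * t * p_gamma' gamma p q < 1).
  { pose proof p_gamma'_sq_lt_1 as Hsq. clear - Hs Ht Hsq. destruct Hs, Ht; subst; nra. }
  assert (Hl : 0 < root s t ^ 2) by (apply pow2_gt_0, root_neq_0; assumption).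
  assert (Ha : 0 < alpha ^ 2) by (apply pow2_gt_0, Rgt_not_eq, exp_pos).
  assert (Hp2 : 0 < 1 - p ^ 2) by nra.
  assert (Hk' : 0 < 1 - s * t * p_gamma' gamma p q) by lra.
  pose proof (Rmult_lt_0_compat _ _ (Rmult_lt_0_compat _ _ (Rmult_lt_0_compat _ _ Ha Hl) Hp2) Hk').
  lra.
Qed.

Lemma modulus_threshold (s t a : R) (b X Y : C) :
  (s = 1 \/ s = -1) -> (t = 1 \/ t = -1) -> -1 < a < 1 -> a ^ 2 + Cmod b ^ 2 = 1 ->
  (RtoC (root s t) * q * Y = RtoC (s * alpha - root s t * p) * X)%C -> Y <> 0%C ->
  (Cmod b * Cmod Y < alpha * Cmod X * Rabs (s - a) <-> s * a < s * t * p_gamma' gamma p q) /\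
  (alpha * Cmod X * Rabs (s - a) < Cmod b * Cmod Y <-> s * t * p_gamma' gamma p q < s * a).
Proof.
  intros Hs Ht Ha Hb HXY HY.
  pose proof (threshold_relation s t Hs Ht) as Hrel.
  pose proof (root_gap_neq_0 s t Hs Ht) as Hg.
  set (k := s * t * p_gamma' gamma p q) in *.
  set (l := root s t) in *. set (g := s * alpha - l * p) in *.
  apply (f_equal Cmod) in HXY. rewrite !Cmod_mult, !Cmod_R in HXY.
  assert (Hy : 0 < Cmod Y) by now apply Cmod_gt_0.
  assert (Hsq : l ^ 2 * (1 - p ^ 2) * Cmod Y ^ 2 = g ^ 2 * Cmod X ^ 2).
  { rewrite <- (pow2_abs l), <- (pow2_abs g). replace (1 - p ^ 2) with (Cmod q ^ 2) by lra.
    replace (Rabs l ^ 2 * Cmod q ^ 2 * Cmod Y ^ 2) with ((Rabs l * Cmod q * Cmod Y) ^ 2) by ring.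
    rewrite HXY. ring. }
  assert (HAB : alpha ^ 2 * Cmod X ^ 2 * (1 - k) = Cmod Y ^ 2 * (1 + k)).
  { apply (Rmult_eq_reg_l (g ^ 2)); [| now apply pow_nonzero].
    transitivity (alpha ^ 2 * (1 - k) * (g ^ 2 * Cmod X ^ 2)); [ring |].
    rewrite <- Hsq.
    transitivity (Cmod Y ^ 2 * (alpha ^ 2 * l ^ 2 * (1 - p ^ 2) * (1 - k))); [ring |].
    rewrite Hrel. ring. }
  destruct (coin_threshold s a k (alpha ^ 2 * Cmod X ^ 2) (Cmod Y ^ 2) Hs Ha) as [H1 H2];
    [apply Rmult_le_pos; apply pow2_ge_0 | now apply pow2_gt_0, Rgt_not_eq | exact HAB |].
  pose proof (Cmod_ge_0 b). pose proof (Cmod_ge_0 X). pose proof (Rabs_pos (s - a)).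
  pose proof (exp_pos (-2 * gamma)).
  assert (Eb : (Cmod b * Cmod Y) ^ 2 = (1 - a ^ 2) * Cmod Y ^ 2).
  { replace (1 - a ^ 2) with (Cmod b ^ 2) by lra. ring. }
  assert (Ea : (alpha * Cmod X * Rabs (s - a)) ^ 2 = alpha ^ 2 * Cmod X ^ 2 * (s - a) ^ 2).
  { rewrite <- (pow2_abs (s - a)). ring. }
  rewrite <- H1, <- H2, <- Eb, <- Ea.
  split; apply Rlt_iff_pow2_lt; apply Rmult_le_pos; try apply Rmult_le_pos; lra.
Qed.

Lemma gap_modulus_pos (s a : R) (X : C) :
  (s = 1 \/ s = -1) -> -1 < a < 1 -> X <> 0%C -> 0 < alpha * Cmod X * Rabs (s - a).
Proof.
  intros Hs Ha HX. apply Cmod_gt_0 in HX. pose proof (exp_pos (-2 * gamma)).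
  assert (0 < Rabs (s - a)) by (apply Rabs_pos_lt; destruct Hs; lra).
  apply Rmult_lt_0_compat; [apply Rmult_lt_0_compat |]; assumption.
Qed.

Lemma coin_modulus_pos (a : R) (b Y : C) :
  -1 < a < 1 -> a ^ 2 + Cmod b ^ 2 = 1 -> Y <> 0%C -> 0 < Cmod b * Cmod Y.
Proof.
  intros Ha Hb HY. apply Rmult_lt_0_compat; apply Cmod_gt_0; [apply unit_pair_neq_0 with a |];
    assumption.
Qed.

Variables (ap am : R) (bp bm : C).
Hypothesis Hap : -1 < ap < 1.
Hypothesis Ham : -1 < am < 1.
Hypothesis Hbp : ap ^ 2 + Cmod bp ^ 2 = 1.
Hypothesis Hbm : am ^ 2 + Cmod bm ^ 2 = 1.

Local Notation interface := (interface_eq gamma p q ap am bp bm).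

Lemma interface_eq_sign_iff (s : R) (lam rp rm X Y : C) :
  (s = 1 \/ s = -1) ->
  (lam * (RtoC p * X + q * Y) = RtoC s * RtoC alpha * X)%C ->
  (lam * (Cconj q * X - RtoC p * Y) = RtoC s * RtoC beta * Y)%C ->
  interface lam rp rm (X, Y) <->
  (rp * (RtoC alpha * X * RtoC (s - ap)) = Cconj bp * Y /\
   RtoC alpha * X * RtoC (s - am) = rm * (Cconj bm * Y))%C.
Proof.
  intros Hs HD HN.
  pose proof (sign_RtoC_sq s Hs) as Hs2.
  pose proof (RtoC_exp_2gamma_inv gamma) as Hab.
  pose proof (unit_pair_mul_conj ap bp Hbp) as Hbpc.
  pose proof (unit_pair_mul_conj am bm Hbm) as Hbmc.
  assert (Hsap : (RtoC alpha * RtoC (s - ap))%C <> 0%C).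
  { apply Cmult_neq_0; apply RtoC_neq_0; [apply Rgt_not_eq, exp_pos | destruct Hs; subst; lra]. }
  assert (Hcbm : Cconj bm <> 0%C) by (apply Cconj_neq_0, unit_pair_neq_0 with am; lra).
  unfold interface_eq, transfer_M, transfer_N, mat2_apply, scale; simpl.
  rewrite !pair_eq_iff; simpl. rewrite !RtoC_minus.
  clear Hbp Hbm Hap Ham Hpq Hp.
  split.
  - intros [[R1 R2] [L1 L2]]. split; nsatz.
  - intros [E1 E2]. split; split.
    + nsatz.
    + apply Ceq_minus, (Cmult_eq_0_reg_l _ _ Hsap). rewrite RtoC_minus. nsatz.
    + nsatz.
    + apply Ceq_minus, (Cmult_eq_0_reg_l _ _ Hcbm). nsatz.
Qed.

Lemma interface_coins_neq (lam rp rm X Y : C) :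
  (X, Y) <> (RtoC 0, RtoC 0) -> Cmod rp < 1 -> Cmod rm < 1 ->
  interface lam rp rm (X, Y) -> ap <> am.
Proof.
  intros Hw Hrp Hrm Hint E.
  assert (Hbp0 : bp <> 0%C) by (apply unit_pair_neq_0 with ap; assumption).
  assert (Hbm0 : bm <> 0%C) by (apply unit_pair_neq_0 with am; assumption).
  unfold interface_eq, transfer_M, transfer_N, mat2_apply, scale in Hint; simpl in Hint.
  destruct Hint as [Hr Hl].
  apply pair_eq_iff in Hr as [R1 R2], Hl as [L1 L2]; simpl in R1, R2, L1, L2.
  rewrite <- E in L1, L2, Hbm.
  assert (Hmod : Cmod bp = Cmod bm).
  { apply Rsqr_inj; [apply Cmod_ge_0 | apply Cmod_ge_0 | unfold Rsqr; nra]. }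
  assert (Hr2 : Cmod (rp * rm) < 1).
  { rewrite Cmod_mult. pose proof (Cmod_ge_0 rp). pose proof (Cmod_ge_0 rm). nra. }
  apply Hw. f_equal.
  - apply (Cmod_contraction_eq_0 bm bp (rm * rp) X);
      [now symmetry | assumption | now rewrite Cmult_comm |].
    clear - R2 L2. nsatz.
  - apply (Cmod_contraction_eq_0 (Cconj bp) (Cconj bm) (rp * rm) Y);
      [now rewrite !Cmod_conj | now apply Cconj_neq_0 | assumption |].
    clear - R1 L1. nsatz.
Qed.

Lemma interface_sign_relations (lam rp rm X Y : C) :
  lam <> 0%C -> (X, Y) <> (RtoC 0, RtoC 0) -> Cmod rp < 1 -> Cmod rm < 1 ->
  interface lam rp rm (X, Y) ->
  X <> 0%C /\ Y <> 0%C /\ exists s : R, (s = 1 \/ s = -1) /\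
    (lam * (RtoC p * X + q * Y) = RtoC s * RtoC alpha * X)%C /\
    (lam * (Cconj q * X - RtoC p * Y) = RtoC s * RtoC beta * Y)%C.
Proof.
  intros Hlam Hw Hrp Hrm Hint.
  pose proof (interface_coins_neq lam rp rm X Y Hw Hrp Hrm Hint) as Hcoins.
  assert (Hq : q <> 0%C) by (apply unit_pair_neq_0 with p; assumption).
  pose proof (RtoC_exp_2gamma_inv gamma) as Hab.
  pose proof (unit_pair_mul_conj ap bp Hbp) as Hbpc.
  pose proof (unit_pair_mul_conj am bm Hbm) as Hbmc.
  unfold interface_eq, transfer_M, transfer_N, mat2_apply, scale in Hint; simpl in Hint.
  destruct Hint as [Hr Hl].
  apply pair_eq_iff in Hr as [R1 R2], Hl as [L1 L2]; simpl in R1, R2, L1, L2.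
  set (D := (lam * (RtoC p * X + q * Y))%C). set (N := (lam * (Cconj q * X - RtoC p * Y))%C).
  (* Eliminating the ratios gives [F_a G_a + (1 - a^2) X Y = 0] on each side, which is affine in
     [a]; its two coefficients are [HL] and [HK]. *)
  assert (HL : (RtoC alpha * X * N - RtoC beta * Y * D = 0)%C).
  { apply (Cmult_eq_0_reg_l (RtoC ap - RtoC am)); [rewrite <- RtoC_minus; apply RtoC_neq_0; lra |].
    unfold D, N. clear - R1 R2 L1 L2 Hab Hbpc Hbmc. nsatz. }
  assert (HK : (D * N = X * Y)%C).
  { unfold D, N in *. clear - R1 R2 HL Hab Hbpc. nsatz. }
  assert (Halpha : RtoC alpha <> 0%C) by (apply RtoC_neq_0, Rgt_not_eq, exp_pos).
  assert (Hbeta : RtoC beta <> 0%C) by (apply RtoC_neq_0, Rgt_not_eq, exp_pos).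
  assert (HX : X <> 0%C).
  { intros ->. apply Hw. f_equal.
    assert (HY2 : (Y * Y = 0)%C).
    { apply (Cmult_eq_0_reg_l (RtoC beta * lam * q)); [now repeat apply Cmult_neq_0 |].
      unfold D, N in HL. clear - HL. nsatz. }
    now destruct (Cmult_integral _ _ HY2). }
  assert (HY : Y <> 0%C).
  { intros ->. apply HX.
    assert (HX2 : (X * X = 0)%C).
    { apply (Cmult_eq_0_reg_l (RtoC alpha * lam * Cconj q));
        [now repeat apply Cmult_neq_0; try apply Cconj_neq_0 |].
      unfold D, N in HL. clear - HL. nsatz. }
    now destruct (Cmult_integral _ _ HX2). }
  split; [exact HX |]. split; [exact HY |].
  apply Ceq_minus in HL. exact (sign_relations _ _ X Y D N Hab HX HY HK (eq_sym HL)).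
Qed.

Lemma sign_relations_root (s : R) (lam X Y : C) :
  (s = 1 \/ s = -1) -> X <> 0%C ->
  (lam * (RtoC p * X + q * Y) = RtoC s * RtoC alpha * X)%C ->
  (lam * (Cconj q * X - RtoC p * Y) = RtoC s * RtoC beta * Y)%C ->
  exists t : R, (t = 1 \/ t = -1) /\ lam = RtoC (root s t).
Proof.
  intros Hs HX HD HN.
  assert (Hquad : (lam * lam + RtoC (2 * (s * S)) * lam - 1 = 0)%C).
  { apply (Cmult_eq_0_reg_l X _ HX).
    pose proof (sign_RtoC_sq s Hs) as Hs2.
    pose proof (RtoC_exp_2gamma_inv gamma) as Hab.
    pose proof (unit_pair_mul_conj p q Hpq) as Hqc.
    assert (HS : RtoC (2 * S) = (RtoC p * (RtoC beta - RtoC alpha))%C)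
      by (rewrite <- RtoC_minus, <- RtoC_mult, p_sinh_eq; reflexivity).
    replace (RtoC (2 * (s * S))) with (RtoC s * RtoC (2 * S))%C
      by (rewrite <- RtoC_mult; f_equal; ring).
    rewrite HS. clear - HD HN Hs2 Hab Hqc. nsatz. }
  assert (Hr : disc ^ 2 = 1 + (s * S) ^ 2) by (rewrite disc_sq; destruct Hs; subst; ring).
  destruct (quadratic_roots_real lam (s * S) disc Hr Hquad) as [t [Ht ->]].
  exists t. split; [exact Ht | f_equal; ring].
Qed.

Lemma root_sign_relations (s t : R) (X Y : C) :
  (s = 1 \/ s = -1) -> (t = 1 \/ t = -1) ->
  X = (RtoC (root s t) * q)%C -> Y = RtoC (s * alpha - root s t * p) ->
  (RtoC (root s t) * (RtoC p * X + q * Y) = RtoC s * RtoC alpha * X)%C /\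
  (RtoC (root s t) * (Cconj q * X - RtoC p * Y) = RtoC s * RtoC beta * Y)%C.
Proof.
  intros Hs Ht -> ->. split.
  - rewrite RtoC_minus, !RtoC_mult. ring.
  - pose proof (root_quadratic s t Hs Ht) as Hquad. pose proof p_sinh_eq as HS.
    apply (f_equal RtoC) in Hquad, HS. rewrite RtoC_minus, RtoC_plus, !RtoC_mult in Hquad.
    rewrite !RtoC_mult, RtoC_minus in HS.
    pose proof (sign_RtoC_sq s Hs) as Hs2.
    pose proof (RtoC_exp_2gamma_inv gamma) as Hab.
    pose proof (unit_pair_mul_conj p q Hpq) as Hqc.
    rewrite RtoC_minus, !RtoC_mult.
    clear - Hquad HS Hs2 Hab Hqc. nsatz.
Qed.

Lemma interface_in_sigma_signs (lam rp rm : C) (w : C * C) :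
  lam <> 0%C -> w <> (RtoC 0, RtoC 0) -> Cmod rp < 1 -> Cmod rm < 1 ->
  interface lam rp rm w -> in_sigma_signs gamma p q ap am lam.
Proof.
  destruct w as [X Y]. intros Hlam Hw Hrp Hrm Hint.
  destruct (interface_sign_relations lam rp rm X Y Hlam Hw Hrp Hrm Hint)
    as (HX & HY & s & Hs & HD & HN).
  destruct (sign_relations_root s lam X Y Hs HX HD HN) as [t [Ht Hl]].
  apply (interface_eq_sign_iff s lam rp rm X Y Hs HD HN) in Hint as [Ep Em].
  assert (Hrel : (RtoC (root s t) * q * Y = RtoC (s * alpha - root s t * p) * X)%C).
  { rewrite Hl in HD. rewrite RtoC_minus, !RtoC_mult.
    clear - HD. nsatz. }
  destruct (modulus_threshold s t ap bp X Y Hs Ht Hap Hbp Hrel HY) as [[Hright _] _].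
  destruct (modulus_threshold s t am bm X Y Hs Ht Ham Hbm Hrel HY) as [_ [Hleft _]].
  apply (f_equal Cmod) in Ep, Em. rewrite !Cmod_mult, ?Cmod_conj, !Cmod_R in Ep, Em.
  rewrite Rabs_pos_eq in Ep, Em by apply Rlt_le, exp_pos.
  exists s, t. split; [exact Hs |]. split; [exact Ht |]. split; [exact Hl |]. split.
  - apply Hright, (Cmod_lt_1_iff rp _ _ (gap_modulus_pos s ap X Hs Hap HX) Ep), Hrp.
  - apply Hleft, (Cmod_lt_1_iff rm _ _ (coin_modulus_pos am bm Y Ham Hbm HY) (eq_sym Em)), Hrm.
Qed.

Lemma in_sigma_signs_interface (lam : C) :
  in_sigma_signs gamma p q ap am lam ->
  exists rp rm w, Cmod rp < 1 /\ Cmod rm < 1 /\ w <> (RtoC 0, RtoC 0) /\ interface lam rp rm w.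
Proof.
  intros (s & t & Hs & Ht & Hl & H1 & H2).
  set (l := root s t) in Hl.
  set (X := (RtoC l * q)%C). set (Y := RtoC (s * alpha - l * p)).
  assert (Hq : q <> 0%C) by (apply unit_pair_neq_0 with p; assumption).
  assert (HX : X <> 0%C) by (apply Cmult_neq_0; [apply RtoC_neq_0, root_neq_0 |]; assumption).
  assert (HY : Y <> 0%C) by (apply RtoC_neq_0, root_gap_neq_0; assumption).
  assert (Hcbp : Cconj bp <> 0%C) by (apply Cconj_neq_0, unit_pair_neq_0 with ap; assumption).
  assert (Hcbm : Cconj bm <> 0%C) by (apply Cconj_neq_0, unit_pair_neq_0 with am; assumption).
  assert (Hsa : forall a, -1 < a < 1 -> RtoC (s - a) <> 0%C)
    by (intros a Ha; apply RtoC_neq_0; destruct Hs; subst; lra).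
  assert (Halpha : RtoC alpha <> 0%C) by (apply RtoC_neq_0, Rgt_not_eq, exp_pos).
  destruct (root_sign_relations s t X Y Hs Ht eq_refl eq_refl) as [HD HN].
  fold l in HD, HN. rewrite <- Hl in HD, HN.
  set (rp := (Cconj bp * Y / (RtoC alpha * X * RtoC (s - ap)))%C).
  set (rm := (RtoC alpha * X * RtoC (s - am) / (Cconj bm * Y))%C).
  assert (Ep : (rp * (RtoC alpha * X * RtoC (s - ap)) = Cconj bp * Y)%C).
  { unfold rp. field. repeat split; auto. }
  assert (Em : (RtoC alpha * X * RtoC (s - am) = rm * (Cconj bm * Y))%C).
  { unfold rm. field. auto. }
  assert (Hrel : (RtoC l * q * Y = RtoC (s * alpha - l * p) * X)%C) by (unfold X, Y; ring).
  destruct (modulus_threshold s t ap bp X Y Hs Ht Hap Hbp Hrel HY) as [[_ Hright] _].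
  destruct (modulus_threshold s t am bm X Y Hs Ht Ham Hbm Hrel HY) as [_ [_ Hleft]].
  exists rp, rm, (X, Y).
  split; [| split; [| split]]; [apply (f_equal Cmod) in Ep | apply (f_equal Cmod) in Em | |].
  - rewrite !Cmod_mult, Cmod_conj, !Cmod_R, Rabs_pos_eq in Ep by apply Rlt_le, exp_pos.
    apply (Cmod_lt_1_iff rp _ _ (gap_modulus_pos s ap X Hs Hap HX) Ep), Hright, H1.
  - rewrite !Cmod_mult, Cmod_conj, !Cmod_R, Rabs_pos_eq in Em by apply Rlt_le, exp_pos.
    apply (Cmod_lt_1_iff rm _ _ (coin_modulus_pos am bm Y Ham Hbm HY) (eq_sym Em)), Hleft, H2.
  - intros E. apply pair_eq_iff in E as [E _]. exact (HX E).
  - apply (interface_eq_sign_iff s lam rp rm X Y Hs HD HN). split; assumption.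
Qed.

End Spectrum.

Lemma two_phase_unit (ap am : R) (bp bm : C) (x : Z) :
  ap ^ 2 + Cmod bp ^ 2 = 1 -> am ^ 2 + Cmod bm ^ 2 = 1 ->
  two_phase ap am x ^ 2 + Cmod (two_phase bp bm x) ^ 2 = 1.
Proof. intros Hp Hm. unfold two_phase. now destruct (0 <=? x)%Z. Qed.

Lemma point_spectrum_iff (gamma p : R) (q : C) (ap am : R) (bp bm : C) (lam : C) :
  p ^ 2 + Cmod q ^ 2 = 1 ->
  in_point_spectrum gamma p q ap am bp bm lam <->
  exists Psi, is_l2 Psi /\ (exists x, Psi x <> (RtoC 0, RtoC 0)) /\
    forall x, coin_eq gamma p q (two_phase ap am) (two_phase bp bm) lam Psi x.
Proof.
  intros Hpq. unfold in_point_spectrum, U_op.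
  split; intros (Psi & Hl2 & Hnz & Heig); exists Psi; split; [exact Hl2 | | exact Hl2 |];
    (split; [exact Hnz |]); now apply (eigen_iff_coin_eq gamma p q _ _ lam Psi Hpq).
Qed.

Lemma point_spectrum_neq_0 (gamma p : R) (q : C) (ap am : R) (bp bm : C) (lam : C) :
  p ^ 2 + Cmod q ^ 2 = 1 -> ap ^ 2 + Cmod bp ^ 2 = 1 -> am ^ 2 + Cmod bm ^ 2 = 1 ->
  in_point_spectrum gamma p q ap am bp bm lam -> lam <> 0%C.
Proof.
  intros Hpq Hbp Hbm Hspec ->.
  apply point_spectrum_iff in Hspec as (Psi & _ & [x Hx] & Hcoin); [| exact Hpq].
  apply Hx, (coin_op_eq_zero gamma _ _ Psi x (two_phase_unit ap am bp bm x Hbp Hbm)).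
  rewrite Hcoin, scale_0. reflexivity.
Qed.

Theorem theorem3p3 (gamma p : R) (q : C) (ap am : R) (bp bm : C) :
  -1 < p < 1 -> p ^ 2 + (Cmod q) ^ 2 = 1 ->
  -1 < ap < 1 -> -1 < am < 1 ->
  ap ^ 2 + (Cmod bp) ^ 2 = 1 -> am ^ 2 + (Cmod bm) ^ 2 = 1 ->
  forall lam : C,
    in_point_spectrum gamma p q ap am bp bm lam <->
    (in_sigma_minus gamma p q ap am lam \/ in_sigma_plus gamma p q ap am lam).
Proof.
  intros Hp Hpq Hap Ham Hbp Hbm lam.
  rewrite sigma_iff_signs. split.
  - intros Hspec.
    pose proof (point_spectrum_neq_0 gamma p q ap am bp bm lam Hpq Hbp Hbm Hspec) as Hlam.
    apply point_spectrum_iff in Hspec as (Psi & Hl2 & Hnz & Hcoin); [| exact Hpq].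
    destruct (coin_eq_interface gamma p q ap am bp bm lam Psi Hlam
      (unit_pair_neq_0 p q Hpq Hp) (unit_pair_neq_0 ap bp Hbp Hap)
      (unit_pair_neq_0 am bm Hbm Ham) Hl2 Hnz Hcoin) as (rp & rm & w & Hrp & Hrm & Hw & Hint).
    exact (interface_in_sigma_signs gamma p q Hp Hpq ap am bp bm Hap Ham Hbp Hbm lam rp rm w
      Hlam Hw Hrp Hrm Hint).
  - intros Hsig. apply point_spectrum_iff; [exact Hpq |].
    destruct (in_sigma_signs_interface gamma p q Hp Hpq ap am bp bm Hap Ham Hbp Hbm lam Hsig)
      as (rp & rm & w & Hrp & Hrm & Hw & Hint).
    exists (profile rp rm w). split; [now apply profile_l2 |]. split; [now apply profile_nonzero |].
    now apply profile_coin_eq.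
Qed.
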